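(* Let $\mathbf{L}$ be a Euclidean modal logic and let $\mathcal{F}^{\rho}_{A,B}$ be a galaxy in $\mathcal{L}_2$. If $\mathbf{N}^{+}\times\{2\}\subseteq\mathtt{S}_{\mathbf{L}}$, then $\mathbf{L}$ is valid in $\mathcal{F}^{\rho}_{A,B}$.
   Context: A frame is a pair $(W,R)$ with $W$ non-empty and $R\subseteq W\times W$. Modal formulas (propositional variables, $\bot,\neg,\vee,\Box$) have standard Kripke semantics; validity means truth at all points under all valuations. A (normal) modal logic contains all tautologies and K axioms and is closed under uniform substitution, modus ponens and necessitation; a Euclidean modal logic is one not containing $\bot$ and containing $\Diamond\psi\to\Box\Diamond\psi$ for all $\psi$. For sets $A,B$ with $A\cap B=\emptyset$, $A\cup B\ne\emptyset$ and $\rho:A\to\wp(B)$, the galaxy $\mathcal{F}^{\rho}_{A,B}$ has universe $A\cup B$ and relation $\bigcup_{s\in A}(\{s\}\times\rho(s))\cup(B\times B)$. $\mathcal{L}_2$ is the class of galaxies with $|A|\ge4$, $|B|\ge4$ and $|B\setminus\rho(s)|=2$ for all $s\in A$. $\mathbf{N}^{+}=\{1,2,\dots\}$, $\mathbf{N}^{-}=\{-1,0,1,\dots\}$. For $m\in\mathbf{N}^{+}$, $n\ge0$, the flower $\mathcal{F}_m^n$ has universe $\{0,\dots,m+n\}$ and relation $(\{0\}\times\{1,\dots,m\})\cup\{1,\dots,m+n\}^2$; $\mathcal{F}_m^{-1}$ has universe $\{1,\dots,m\}$ and relation $\{1,\dots,m\}^2$. $\mathtt{S}_{\mathbf{L}}=\{(m,n)\in\mathbf{N}^{+}\times\mathbf{N}^{-}:\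 \mathbf{L}\text{ valid in }\mathcal{F}_m^n\}$. *)

From Stdlib Require Import ZArith Arith.

Inductive form : Type :=
| Var : nat -> form
| Bot : form
| Neg : form -> form
| Or : form -> form -> form
| Box : form -> form.

Definition Imp (a b : form) : form := Or (Neg a) b.
Definition Dia (a : form) : form := Neg (Box (Neg a)).

Record frame : Type := Frame { W : Type; R : W -> W -> Prop }.

Fixpoint sat (F : frame) (V : nat -> W F -> Prop) (w : W F) (f : form) : Prop :=
  match f with
  | Var n => V n w
  | Bot => False
  | Neg a => ~ sat F V w a
  | Or a b => sat F V w a \/ sat F V w b
  | Box a => forall v, R F w v -> sat F V v a
  end.

Definition valid_in (F : frame) (f : form) : Prop :=
  forall (V : nat -> W F -> Prop) (w : W F), sat F V w f.

Definition logic_valid_in (L : form -> Prop) (F : frame) : Prop :=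
  forall f, L f -> valid_in F f.

(* Propositional tautologies: true under every classical truth assignment
   to the maximal non-propositional subformulas (variables and boxed formulas). *)
Fixpoint tv (v : form -> Prop) (f : form) : Prop :=
  match f with
  | Var n => v (Var n)
  | Bot => False
  | Neg a => ~ tv v a
  | Or a b => tv v a \/ tv v b
  | Box a => v (Box a)
  end.

Definition tautology (f : form) : Prop := forall v : form -> Prop, tv v f.

Fixpoint subst (s : nat -> form) (f : form) : form :=
  match f with
  | Var n => s n
  | Bot => Bot
  | Neg a => Neg (subst s a)
  | Or a b => Or (subst s a) (subst s b)
  | Box a => Box (subst s a)
  end.

Definition K_axiom : form :=
  Imp (Box (Imp (Var 0) (Var 1))) (Imp (Box (Var 0)) (Box (Var 1))).

Definition normal_modal_logic (L : form -> Prop) : Prop :=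
  (forall f, tautology f -> L f) /\
  L K_axiom /\
  (forall s f, L f -> L (subst s f)) /\
  (forall a b, L (Imp a b) -> L a -> L b) /\
  (forall a, L a -> L (Box a)).

Definition euclidean_logic (L : form -> Prop) : Prop :=
  normal_modal_logic L /\ ~ L Bot /\
  (forall psi, L (Imp (Dia psi) (Box (Dia psi)))).

(* Galaxy F^rho_{A,B}: universe is the disjoint union A + B,
   relation  U_{s in A} {s} x rho(s)  union  B x B. *)
Definition galaxy_rel (A B : Type) (rho : A -> B -> Prop) (x y : A + B) : Prop :=
  match x, y with
  | inl s, inr b => rho s b
  | inr _, inr _ => True
  | _, _ => False
  end.

Definition galaxy (A B : Type) (rho : A -> B -> Prop) : frame :=
  Frame (A + B) (galaxy_rel A B rho).

Definition card_ge4 (T : Type) : Prop :=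
  exists a1 a2 a3 a4 : T,
    a1 <> a2 /\ a1 <> a3 /\ a1 <> a4 /\ a2 <> a3 /\ a2 <> a4 /\ a3 <> a4.

Definition card_eq2 {T : Type} (P : T -> Prop) : Prop :=
  exists b1 b2 : T, b1 <> b2 /\ P b1 /\ P b2 /\ (forall b, P b -> b = b1 \/ b = b2).

Definition in_L2 (A B : Type) (rho : A -> B -> Prop) : Prop :=
  card_ge4 A /\ card_ge4 B /\ (forall s : A, card_eq2 (fun b => ~ rho s b)).

Definition flower_dom (m : nat) (n : Z) (k : nat) : Prop :=
  if (0 <=? n)%Z then k <= m + Z.to_nat n else 1 <= k <= m.

Definition flower_rel (m : nat) (n : Z) (k l : nat) : Prop :=
  if (0 <=? n)%Z then
    (k = 0 /\ 1 <= l <= m) \/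
    (1 <= k <= m + Z.to_nat n /\ 1 <= l <= m + Z.to_nat n)
  else (1 <= k <= m /\ 1 <= l <= m).

Definition flower (m : nat) (n : Z) : frame :=
  Frame {k : nat | flower_dom m n k}
        (fun x y => flower_rel m n (proj1_sig x) (proj1_sig y)).

Definition S_L (L : form -> Prop) (m : nat) (n : Z) : Prop :=
  1 <= m /\ (-1 <= n)%Z /\ logic_valid_in L (flower m n).

(* A formula f only sees its first N variables (N = var_bound f), and for f a point of B
   is described by its N-bit atom code, of which there are at most 2^N.  Given a point w
   of the galaxy, fix s in A (the point w itself if it lies in A).  Label the flower
   F_(2^N)^2 so that its root stands for s, petal 1 + c of the cluster seen from the root
   for a point of rho(s) with code c (any point of rho(s) if there is none), and the two
   remaining petals for the two points of B outside rho(s).  Relating a petal to every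
   point of B with the code of its label is a bisimulation for the first N variables, so
   validity of f in the flower transfers to the galaxy. *)
From Stdlib Require Import ZArith Arith.
From Stdlib Require Import Lia ClassicalEpsilon Classical.

Fixpoint vars_below (N : nat) (f : form) : Prop :=
  match f with
  | Var n => n < N
  | Bot => True
  | Neg a => vars_below N a
  | Or a b => vars_below N a /\ vars_below N b
  | Box a => vars_below N a
  end.

Fixpoint var_bound (f : form) : nat :=
  match f with
  | Var n => S n
  | Bot => 0
  | Neg a => var_bound a
  | Or a b => Nat.max (var_bound a) (var_bound b)
  | Box a => var_bound a
  end.

Lemma vars_below_mono f N N' : N <= N' -> vars_below N f -> vars_below N' f.
Proof.
  induction f; simpl; intros; try tauto; lia.
Qed.

Lemma vars_below_var_bound f : vars_below (var_bound f) f.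
Proof.
  induction f; simpl; auto.
  split; [apply (vars_below_mono f1 (var_bound f1)) | apply (vars_below_mono f2 (var_bound f2))];
    auto; lia.
Qed.

Record bisimulation (N : nat) (F1 F2 : frame)
    (V1 : nat -> W F1 -> Prop) (V2 : nat -> W F2 -> Prop)
    (Z : W F1 -> W F2 -> Prop) : Prop := {
  bisim_atoms : forall x z n, Z x z -> n < N -> (V1 n x <-> V2 n z);
  bisim_forth : forall x z y, Z x z -> R F1 x y -> exists z', R F2 z z' /\ Z y z';
  bisim_back : forall x z z', Z x z -> R F2 z z' -> exists y, R F1 x y /\ Z y z'
}.

Lemma sat_bisim N F1 F2 V1 V2 Z :
  bisimulation N F1 F2 V1 V2 Z ->
  forall f, vars_below N f -> forall x z, Z x z -> (sat F1 V1 x f <-> sat F2 V2 z f).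
Proof.
  intros [Hat Hforth Hback].
  induction f; simpl; intros Hv x z Hxz.
  - now apply Hat.
  - tauto.
  - now rewrite (IHf Hv x z Hxz).
  - destruct Hv as [Hv1 Hv2].
    now rewrite (IHf1 Hv1 x z Hxz), (IHf2 Hv2 x z Hxz).
  - split; intros Hbox v Hzv.
    + destruct (Hback _ _ _ Hxz Hzv) as [y [Hxy Hyv]].
      apply (IHf Hv y v Hyv). auto.
    + destruct (Hforth _ _ _ Hxz Hzv) as [z' [Hzz' Hvz']].
      apply (IHf Hv v z' Hvz'). auto.
Qed.

Lemma valid_in_bisim_image (F1 F2 : frame) f :
  (forall (V2 : nat -> W F2 -> Prop) z, exists V1 Z x,
      bisimulation (var_bound f) F1 F2 V1 V2 Z /\ Z x z) ->
  valid_in F1 f -> valid_in F2 f.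
Proof.
  intros Hcover Hvalid V2 z.
  destruct (Hcover V2 z) as [V1 [Z [x [HZ Hxz]]]].
  apply (sat_bisim _ _ _ _ _ _ HZ f (vars_below_var_bound f) x z Hxz).
  apply Hvalid.
Qed.

Definition agree_below {X : Type} (N : nat) (V : nat -> X -> Prop) (x y : X) : Prop :=
  forall n, n < N -> (V n x <-> V n y).

Fixpoint atom_code {X : Type} (V : nat -> X -> Prop) (N : nat) (x : X) : nat :=
  match N with
  | 0 => 0
  | S N => 2 * atom_code V N x + (if excluded_middle_informative (V N x) then 1 else 0)
  end.

Lemma atom_code_lt {X} (V : nat -> X -> Prop) N x : atom_code V N x < 2 ^ N.
Proof.
  induction N; simpl; [lia|].
  destruct (excluded_middle_informative (V N x)); lia.
Qed.

Lemma atom_code_agree {X} (V : nat -> X -> Prop) N x y :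
  atom_code V N x = atom_code V N y -> agree_below N V x y.
Proof.
  induction N; simpl; intros Hcode n Hn; [lia|].
  destruct (excluded_middle_informative (V N x));
    destruct (excluded_middle_informative (V N y)); try lia;
    (assert (n = N \/ n < N) as [-> | Hlt] by lia; [tauto | apply IHN; auto; lia]).
Qed.

Lemma flower2_dom m k : flower_dom m 2 k <-> k <= m + 2.
Proof. reflexivity. Qed.

Lemma flower2_rel m k l :
  flower_rel m 2 k l <-> (k = 0 /\ 1 <= l <= m) \/ (1 <= k <= m + 2 /\ 1 <= l <= m + 2).
Proof. reflexivity. Qed.

Section GalaxyFlower.

Variables (A B : Type) (rho : A -> B -> Prop) (s : A) (b0 b1 b2 : B).
Hypothesis rho_b0 : rho s b0.
Hypothesis not_rho : forall b, ~ rho s b -> b = b1 \/ b = b2.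
Variables (N : nat) (V : nat -> A + B -> Prop).

Local Notation m := (2 ^ N).
Local Notation code b := (atom_code V N (inr b)).

Definition rep (c : nat) : B :=
  match excluded_middle_informative (exists b, rho s b /\ code b = c) with
  | left H => proj1_sig (constructive_indefinite_description _ H)
  | right _ => b0
  end.

Lemma rep_in_rho c : rho s (rep c).
Proof.
  unfold rep; destruct excluded_middle_informative as [H|]; auto.
  exact (proj1 (proj2_sig (constructive_indefinite_description _ H))).
Qed.

Lemma rep_code b : rho s b -> code (rep (code b)) = code b.
Proof.
  intro Hb; unfold rep; destruct excluded_middle_informative as [H | Hno].
  - exact (proj2 (proj2_sig (constructive_indefinite_description _ H))).
  - exfalso; eauto.
Qed.

Definition label (k : nat) : B :=
  if k <=? m then rep (k - 1) else if k =? m + 1 then b1 else b2.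

Definition related (k : nat) (z : A + B) : Prop :=
  match k, z with
  | 0, inl a => a = s
  | S _, inr b => agree_below N V (inr (label k)) (inr b)
  | _, _ => False
  end.

Definition flower_point (k : nat) (Hk : k <= m + 2) : W (flower m 2) :=
  exist _ k (proj2 (flower2_dom m k) Hk).

Definition flower_val (n : nat) (x : W (flower m 2)) : Prop :=
  match proj1_sig x with
  | 0 => V n (inl s)
  | k => V n (inr (label k))
  end.

Lemma label_in_rho k : k <= m -> rho s (label k).
Proof.
  intro Hk; unfold label.
  rewrite (proj2 (Nat.leb_le k m) Hk); apply rep_in_rho.
Qed.

Lemma label_code b : rho s b -> code b < m /\ related (S (code b)) (inr b).
Proof.
  intro Hb; pose proof (atom_code_lt V N (inr b)) as Hlt.
  split; [exact Hlt |]; simpl.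
  apply atom_code_agree; unfold label.
  rewrite (proj2 (Nat.leb_le (S (code b)) m) Hlt), Nat.sub_1_r; simpl.
  now apply rep_code.
Qed.

Lemma label_extra : label (S m) = b1 /\ label (S (S m)) = b2.
Proof.
  unfold label; split.
  - rewrite (proj2 (Nat.leb_gt _ _) (Nat.lt_succ_diag_r m)), Nat.add_1_r, Nat.eqb_refl.
    reflexivity.
  - rewrite (proj2 (Nat.leb_gt (S (S m)) m) ltac:(lia)).
    rewrite (proj2 (Nat.eqb_neq (S (S m)) (m + 1)) ltac:(lia)).
    reflexivity.
Qed.

Lemma label_onto b : exists k, 1 <= k <= m + 2 /\ related k (inr b).
Proof.
  destruct (classic (rho s b)) as [Hb | Hb].
  - destruct (label_code b Hb); exists (S (code b)); split; [lia | auto].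
  - destruct label_extra as [Hb1 Hb2].
    destruct (not_rho b Hb) as [-> | ->]; [exists (S m) | exists (S (S m))];
      (split; [lia |]); simpl; rewrite ?Hb1, ?Hb2; intros n _; tauto.
Qed.

Lemma flower_galaxy_bisim :
  bisimulation N (flower m 2) (galaxy A B rho) flower_val V
    (fun x => related (proj1_sig x)).
Proof.
  split.
  - intros [[|k] Hk] [a|b] n Hxz Hn; simpl in *; try contradiction.
    + now subst a.
    + now apply Hxz.
  - intros [k Hk] z [l Hl] Hxz Hkl; simpl in *.
    rewrite flower2_rel in Hkl.
    assert (Hrel : related l (inr (label l))).
    { destruct l as [|l]; [lia | intros n _; tauto]. }
    exists (inr (label l)); split; [| exact Hrel].
    destruct k as [|k], z as [a|b]; simpl in *; try contradiction; [| exact I].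
    subst a; apply label_in_rho; lia.
  - intros [[|k] Hk] [a|b] [a'|b'] Hxz Hzz'; simpl in *; try contradiction.
    + subst a; destruct (label_code b' Hzz') as [Hlt Hrel].
      exists (flower_point (S (code b')) ltac:(lia)).
      split; [rewrite flower2_rel; simpl; lia | exact Hrel].
    + destruct (label_onto b') as [l [Hl Hrel]].
      exists (flower_point l ltac:(lia)).
      rewrite flower2_dom in Hk.
      split; [rewrite flower2_rel; simpl; lia | exact Hrel].
Qed.

Lemma related_exists (w : A + B) :
  (forall a, w = inl a -> a = s) -> exists x : W (flower m 2), related (proj1_sig x) w.
Proof.
  intro Hw; destruct w as [a|b].
  - exists (flower_point 0 ltac:(lia)); simpl; auto.
  - destruct (label_onto b) as [k [Hk Hrel]].
    exists (flower_point k ltac:(lia)); exact Hrel.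
Qed.

End GalaxyFlower.

Lemma exists_of_card_eq2_compl {T : Type} (P : T -> Prop) :
  card_ge4 T -> card_eq2 (fun t => ~ P t) -> exists t, P t.
Proof.
  intros [c1 [c2 [c3 [c4 Hdistinct]]]] [d1 [d2 [_ [_ [_ Hcompl]]]]].
  apply NNPP; intro Hnone.
  assert (Hc : forall c, c = d1 \/ c = d2) by (intro c; apply Hcompl; eauto).
  destruct (Hc c1), (Hc c2), (Hc c3); subst; intuition congruence.
Qed.

Lemma galaxy_flower_cover (A B : Type) (rho : A -> B -> Prop) N :
  in_L2 A B rho ->
  forall (V : nat -> W (galaxy A B rho) -> Prop) w, exists V1 Z x,
    bisimulation N (flower (2 ^ N) 2) (galaxy A B rho) V1 V Z /\ Z x w.
Proof.
  intros [[a0 _] [HB Hrho]] V w.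
  set (s := match w with inl a => a | inr _ => a0 end).
  destruct (Hrho s) as [b1 [b2 [_ [_ [_ Hnot]]]]].
  destruct (exists_of_card_eq2_compl (rho s) HB (Hrho s)) as [b0 Hb0].
  destruct (related_exists A B rho s b0 b1 b2 Hnot N V w) as [x Hx].
  { intros a ->; reflexivity. }
  exists (flower_val A B rho s b0 b1 b2 N V),
    (fun x => related A B rho s b0 b1 b2 N V (proj1_sig x)), x.
  split; [exact (flower_galaxy_bisim A B rho s b0 b1 b2 Hb0 Hnot N V) | exact Hx].
Qed.

Theorem lemma37 (L : form -> Prop) (A B : Type) (rho : A -> B -> Prop) :
  euclidean_logic L ->
  in_L2 A B rho ->
  (forall m : nat, 1 <= m -> S_L L m 2%Z) ->
  logic_valid_in L (galaxy A B rho).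
Proof.
  intros _ HL2 HS f Lf.
  apply (valid_in_bisim_image (flower (2 ^ var_bound f) 2)).
  - apply galaxy_flower_cover, HL2.
  - assert (Hm : 1 <= 2 ^ var_bound f) by (pose proof (Nat.pow_nonzero 2 (var_bound f)); lia).
    destruct (HS _ Hm) as [_ [_ Hvalid]].
    now apply Hvalid.
Qed.
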